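(* Let $K,G:[0,\infty)\to\mathbb{R}$ be continuous, let $f$ solve $f''+Kf=0$ with $f>0$ on $(0,\infty)$ and $\int_1^\infty f(t)^{-2}dt<\infty$, and let $m$ solve $m''+Gm=0$ with $m(0)=f(0)$, $m'(0)=f'(0)$. Suppose the support of $G-K$ is contained in a bounded interval $[a,b]\subset[1,\infty)$. Then for all $t\ge 0$, $$|(m'f-mf')(t)|\le(\alpha(m)+1)\,\|G-K\|_2\,\|f^2|_{[a,b]}\|_2,$$ where $\|G-K\|_2:=\sqrt{\int_0^\infty|G-K|^2dt}$, $\|f^2|_{[a,b]}\|_2:=\sqrt{\int_a^b f(t)^4dt}$, $\sigma(t):=m(t)/f(t)-1$ for $t>0$, and $\alpha(m):=\sup_{t>0}|\sigma(t)|$. *)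

From Stdlib Require Import Reals.
Open Scope R_scope.

Definition improper_integral_converges (g : R -> R) (a : R) : Prop :=
  (forall x, a <= x -> exists _ : Riemann_integrable g a x, True) /\
  exists L : R, forall eps : R, 0 < eps -> exists M : R,
    forall (x : R) (pr : Riemann_integrable g a x),
      M <= x -> Rabs (RiemannInt pr - L) < eps.

From Stdlib Require Import Reals Lra Psatz.
Open Scope R_scope.

(* The quantity [m' f - m f'] is the Wronskian W of m and f. It vanishes at 0 by
   the matching initial conditions, and W' = m'' f - m f'' = (K - G) m f. Since
   |m / f - 1| <= alpha on (0, oo), |m| <= (alpha + 1) f there, hence
   |W'| <= (alpha + 1) |G - K| f^2, a function supported in [a, b]. Integrating
   from 0 and applying Cauchy-Schwarz on [a, b] gives the bound. *)

Lemma continuity_pt_pow_fun (h : R -> R) n x :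
  continuity_pt h x -> continuity_pt (fun y => h y ^ n) x.
Proof.
  intros Hh.
  apply (continuity_pt_comp h (fun y => y ^ n)); [exact Hh |].
  apply derivable_continuous_pt, derivable_pt_pow.
Qed.

Lemma RiemannInt_ge0 (g : R -> R) a b (pr : Riemann_integrable g a b) :
  a <= b -> (forall x, a < x < b -> 0 <= g x) -> 0 <= RiemannInt pr.
Proof.
  intros Hab Hg.
  rewrite <- (Rmult_0_l (b - a)), <- (RiemannInt_P15 (RiemannInt_P14 a b 0)).
  apply RiemannInt_P19; auto.
Qed.

Lemma RiemannInt_eq0 (g : R -> R) a b (pr : Riemann_integrable g a b) :
  a <= b -> (forall x, a < x < b -> g x = 0) -> RiemannInt pr = 0.
Proof.
  intros Hab Hg.
  destruct (RiemannInt_const_bound (l := 0) (u := 0) pr Hab) as [H0 H1].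
  - intros x Hx; rewrite (Hg x Hx); lra.
  - lra.
Qed.

Lemma Riemann_integrable_of_continuity (g : R -> R) a b :
  (forall x, continuity_pt g x) -> a <= b -> Riemann_integrable g a b.
Proof. intros Hg Hab; apply continuity_implies_RiemannInt; auto. Qed.

Lemma RiemannInt_le_of_support (g : R -> R) c a b t
  (pt : Riemann_integrable g c t) (pab : Riemann_integrable g a b) :
  (forall x, continuity_pt g x) -> c <= a <= b -> c <= t ->
  (forall x, 0 <= g x) -> (forall x, c <= x -> (x < a \/ b < x) -> g x = 0) ->
  RiemannInt pt <= RiemannInt pab.
Proof.
  intros Hg [Hca Hab] Hct Hpos Hsupp.
  set (T := Rmax t b).
  assert (HtT : t <= T) by apply Rmax_l.
  assert (HbT : b <= T) by apply Rmax_r.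
  assert (HaT : a <= T) by lra.
  assert (HcT : c <= T) by lra.
  pose proof (fun x y => Riemann_integrable_of_continuity g x y Hg) as Hint.
  pose proof (RiemannInt_P26 pt (Hint t T HtT) (Hint c T HcT)).
  pose proof (RiemannInt_P26 (Hint c a Hca) (Hint a T HaT) (Hint c T HcT)).
  pose proof (RiemannInt_P26 pab (Hint b T HbT) (Hint a T HaT)).
  assert (Htail : 0 <= RiemannInt (Hint t T HtT)) by (apply RiemannInt_ge0; auto).
  assert (Hleft : RiemannInt (Hint c a Hca) = 0)
    by (apply RiemannInt_eq0; auto; intros x Hx; apply Hsupp; lra).
  assert (Hright : RiemannInt (Hint b T HbT) = 0)
    by (apply RiemannInt_eq0; auto; intros x Hx; apply Hsupp; lra).
  lra.
Qed.

Lemma RiemannInt_le_extend_left (g : R -> R) c a b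
  (pca : Riemann_integrable g c a) (pab : Riemann_integrable g a b)
  (pcb : Riemann_integrable g c b) :
  c <= a -> (forall x, c < x < a -> 0 <= g x) -> RiemannInt pab <= RiemannInt pcb.
Proof.
  intros Hca Hg.
  rewrite <- (RiemannInt_P26 pca pab pcb).
  pose proof (RiemannInt_ge0 g c a pca Hca Hg); lra.
Qed.

Lemma le_sqrt_mult_of_quadratic (A B C : R) : 0 <= A -> 0 <= B ->
  (forall l, 2 * l * C <= l ^ 2 * A + B) -> C <= sqrt A * sqrt B.
Proof.
  intros HA HB H.
  rewrite <- sqrt_mult_alt by lra.
  destruct (Rle_or_lt C 0) as [HC | HC]; [pose proof (sqrt_pos (A * B)); lra |].
  rewrite <- (sqrt_pow2 C) by lra.
  apply sqrt_le_1_alt.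
  destruct (Req_dec A 0) as [HA0 | HA0].
  - specialize (H ((B + 1) / (2 * C))).
    replace (2 * ((B + 1) / (2 * C)) * C) with (B + 1) in H by (field; lra).
    subst A; lra.
  - specialize (H (C / A)).
    assert (H' : A * (2 * (C / A) * C) <= A * ((C / A) ^ 2 * A + B))
      by (apply Rmult_le_compat_l; lra).
    replace (A * (2 * (C / A) * C)) with (2 * C ^ 2) in H' by (field; lra).
    replace (A * ((C / A) ^ 2 * A + B)) with (C ^ 2 + A * B) in H' by (field; lra).
    lra.
Qed.

Lemma RiemannInt_Cauchy_Schwarz (u v : R -> R) a b
  (pu : Riemann_integrable (fun x => u x ^ 2) a b)
  (pv : Riemann_integrable (fun x => v x ^ 2) a b)
  (puv : Riemann_integrable (fun x => u x * v x) a b) :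
  a <= b -> RiemannInt puv <= sqrt (RiemannInt pu) * sqrt (RiemannInt pv).
Proof.
  intros Hab.
  apply le_sqrt_mult_of_quadratic;
    [apply RiemannInt_ge0; auto; intros; apply pow2_ge_0 ..|].
  intros l.
  pose proof (RiemannInt_P13 pv pu (RiemannInt_P10 (l ^ 2) pv pu)) as Hrhs.
  pose proof (RiemannInt_P13 (RiemannInt_P14 a b 0) puv
                (RiemannInt_P10 (2 * l) (RiemannInt_P14 a b 0) puv)) as Hlhs.
  rewrite RiemannInt_P15 in Hlhs.
  assert (Hle : RiemannInt (RiemannInt_P10 (2 * l) (RiemannInt_P14 a b 0) puv)
                <= RiemannInt (RiemannInt_P10 (l ^ 2) pv pu)).
  { apply RiemannInt_P19; auto; intros x _; unfold fct_cte.
    pose proof (pow2_ge_0 (l * u x - v x)); nra. }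
  lra.
Qed.

Lemma increment_le_scal_RiemannInt (F F' g : R -> R) c a b
  (pr : Riemann_integrable g a b) : a <= b ->
  (forall x, a <= x <= b -> derivable_pt_lim F x (F' x)) ->
  (forall x, a <= x <= b -> continuity_pt g x) ->
  (forall x, a < x < b -> F' x <= c * g x) ->
  F b - F a <= c * RiemannInt pr.
Proof.
  intros Hab HF Hg Hle.
  rewrite (RiemannInt_P20 Hab (FTC_P1 Hab Hg) pr).
  set (P := primitive Hab (FTC_P1 Hab Hg)).
  destruct (Rle_lt_or_eq_dec a b Hab) as [Hlt | <-]; [| lra].
  destruct (MVT_cor2 (fun x => c * P x - F x) (fun x => c * g x - F' x) a b Hlt)
    as [x [Hx Hxab]].
  - intros x Hx; apply derivable_pt_lim_minus; [| auto].
    apply derivable_pt_lim_scal, RiemannInt_P28; auto.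
  - specialize (Hle x Hxab); nra.
Qed.

Lemma Rabs_increment_le_scal_RiemannInt (F F' g : R -> R) c a b
  (pr : Riemann_integrable g a b) : a <= b ->
  (forall x, a <= x <= b -> derivable_pt_lim F x (F' x)) ->
  (forall x, a <= x <= b -> continuity_pt g x) ->
  (forall x, a < x < b -> Rabs (F' x) <= c * g x) ->
  Rabs (F b - F a) <= c * RiemannInt pr.
Proof.
  intros Hab HF Hg Hle.
  pose proof (increment_le_scal_RiemannInt F F' g c a b pr Hab HF Hg) as Hup.
  pose proof (increment_le_scal_RiemannInt (fun x => - F x) (fun x => - F' x)
                g c a b pr Hab) as Hdown.
  apply Rabs_le; split.
  - enough (- F b - - F a <= c * RiemannInt pr) by lra.
    apply Hdown; auto.
    + intros x Hx; apply derivable_pt_lim_opp; auto.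
    + intros x Hx; pose proof (Rle_abs (- F' x)); rewrite Rabs_Ropp in *;
        specialize (Hle x Hx); lra.
  - apply Hup; intros x Hx; pose proof (Rle_abs (F' x)); specialize (Hle x Hx); lra.
Qed.

Lemma derivable_pt_lim_wronskian (u u' u'' v v' v'' : R -> R) x :
  derivable_pt_lim u x (u' x) -> derivable_pt_lim u' x (u'' x) ->
  derivable_pt_lim v x (v' x) -> derivable_pt_lim v' x (v'' x) ->
  derivable_pt_lim (fun y => u' y * v y - u y * v' y) x (u'' x * v x - u x * v'' x).
Proof.
  intros Hu Hu' Hv Hv'.
  replace (u'' x * v x - u x * v'' x)
    with ((u'' x * v x + u' x * v' x) - (u' x * v' x + u x * v'' x)) by ring.
  apply (derivable_pt_lim_minus (fun y => u' y * v y) (fun y => u y * v' y));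
    apply derivable_pt_lim_mult; auto.
Qed.

Lemma Rabs_le_of_ratio_bound (x y alpha : R) :
  0 < y -> Rabs (x / y - 1) <= alpha -> Rabs x <= (alpha + 1) * y.
Proof.
  intros Hy Hxy.
  replace x with (y * (x / y - 1) + y) by (field; lra).
  eapply Rle_trans; [apply Rabs_triang |].
  rewrite Rabs_mult, (Rabs_right y) by lra.
  nra.
Qed.

Lemma Rabs_wronskian_derivative_le (Kx Gx fx f''x mx m''x alpha : R) :
  f''x + Kx * fx = 0 -> m''x + Gx * mx = 0 -> 0 < fx ->
  Rabs (mx / fx - 1) <= alpha ->
  Rabs (m''x * fx - mx * f''x) <= (alpha + 1) * (Rabs (Gx - Kx) * fx ^ 2).
Proof.
  intros Hf Hm Hfx Hratio.
  replace (m''x * fx - mx * f''x) with (- (Gx - Kx) * mx * fx) by nra.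
  rewrite !Rabs_mult, Rabs_Ropp, (Rabs_right fx) by lra.
  pose proof (Rabs_le_of_ratio_bound mx fx alpha Hfx Hratio).
  pose proof (Rabs_pos (Gx - Kx)).
  replace ((alpha + 1) * (Rabs (Gx - Kx) * fx ^ 2))
    with (Rabs (Gx - Kx) * ((alpha + 1) * fx) * fx) by ring.
  apply Rmult_le_compat_r; [lra |].
  apply Rmult_le_compat_l; lra.
Qed.

Section Wronskian.

Variables K G f f' f'' m m' m'' : R -> R.
Hypothesis HK : continuity K.
Hypothesis HG : continuity G.
Hypothesis Hf1 : forall t, derivable_pt_lim f t (f' t).
Hypothesis Hf2 : forall t, derivable_pt_lim f' t (f'' t).
Hypothesis Hfeq : forall t, 0 <= t -> f'' t + K t * f t = 0.
Hypothesis Hfpos : forall t, 0 < t -> 0 < f t.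
Hypothesis Hm1 : forall t, derivable_pt_lim m t (m' t).
Hypothesis Hm2 : forall t, derivable_pt_lim m' t (m'' t).
Hypothesis Hmeq : forall t, 0 <= t -> m'' t + G t * m t = 0.
Hypothesis Hm0 : m 0 = f 0.
Hypothesis Hm'0 : m' 0 = f' 0.
Variable alpha : R.
Hypothesis Hratio : forall t, 0 < t -> Rabs (m t / f t - 1) <= alpha.

Lemma continuity_pt_Rabs_diff x : continuity_pt (fun y => Rabs (G y - K y)) x.
Proof.
  apply (continuity_pt_comp (fun y => G y - K y) Rabs).
  - apply continuity_pt_minus; [apply HG | apply HK].
  - apply Rcontinuity_abs.
Qed.

Lemma continuity_pt_sqr x : continuity_pt (fun y => f y ^ 2) x.
Proof.
  apply continuity_pt_pow_fun, derivable_continuous_pt.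
  exists (f' x); apply Hf1.
Qed.

Lemma Rabs_wronskian_le t
  (pr : Riemann_integrable (fun x => Rabs (G x - K x) * f x ^ 2) 0 t) :
  0 <= t -> Rabs (m' t * f t - m t * f' t) <= (alpha + 1) * RiemannInt pr.
Proof.
  intros Ht.
  replace (m' t * f t - m t * f' t)
    with ((m' t * f t - m t * f' t) - (m' 0 * f 0 - m 0 * f' 0))
    by (rewrite Hm0, Hm'0; ring).
  apply (Rabs_increment_le_scal_RiemannInt (fun x => m' x * f x - m x * f' x)
           (fun x => m'' x * f x - m x * f'' x)); auto.
  - intros x _; apply derivable_pt_lim_wronskian; auto.
  - intros x _; apply continuity_pt_mult;
      [apply continuity_pt_Rabs_diff | apply continuity_pt_sqr].
  - intros x Hx; apply Rabs_wronskian_derivative_le.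
    + apply Hfeq; lra.
    + apply Hmeq; lra.
    + apply Hfpos; lra.
    + apply Hratio; lra.
Qed.

End Wronskian.

Theorem lemma2p2
  (K G f f' f'' m m' m'' : R -> R) (a b : R)
  (HK : continuity K) (HG : continuity G)
  (Hf1 : forall t, derivable_pt_lim f t (f' t))
  (Hf2 : forall t, derivable_pt_lim f' t (f'' t))
  (Hfeq : forall t, 0 <= t -> f'' t + K t * f t = 0)
  (Hfpos : forall t, 0 < t -> 0 < f t)
  (Hfint : improper_integral_converges (fun t => / (f t) ^ 2) 1)
  (Hm1 : forall t, derivable_pt_lim m t (m' t))
  (Hm2 : forall t, derivable_pt_lim m' t (m'' t))
  (Hmeq : forall t, 0 <= t -> m'' t + G t * m t = 0)
  (Hm0 : m 0 = f 0) (Hm'0 : m' 0 = f' 0)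
  (Hab : 1 <= a <= b)
  (Hsupp : forall t, 0 <= t -> (t < a \/ b < t) -> G t - K t = 0)
  (alpha : R)
  (Halpha : is_lub (fun y => exists t, 0 < t /\ y = Rabs (m t / f t - 1)) alpha)
  (prGK : Riemann_integrable (fun t => (Rabs (G t - K t)) ^ 2) 0 b)
  (prf : Riemann_integrable (fun t => (f t) ^ 4) a b) :
  forall t, 0 <= t ->
    Rabs (m' t * f t - m t * f' t)
      <= (alpha + 1) * sqrt (RiemannInt prGK) * sqrt (RiemannInt prf).
Proof.
  intros t Ht.
  destruct Halpha as [Hub _].
  assert (Hratio : forall x, 0 < x -> Rabs (m x / f x - 1) <= alpha)
    by (intros x Hx; apply Hub; exists x; split; [lra | reflexivity]).
  assert (Halpha0 : 0 <= alpha)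
    by (eapply Rle_trans; [apply Rabs_pos | apply (Hratio 1); lra]).
  set (u := fun x => Rabs (G x - K x)).
  set (v := fun x => f x ^ 2).
  assert (Hu := continuity_pt_Rabs_diff K G HK HG).
  assert (Hv := continuity_pt_sqr f f' Hf1).
  assert (Huv : forall x, continuity_pt (fun y => u y * v y) x)
    by (intro x; apply continuity_pt_mult; auto).
  assert (Hu2 : forall x, continuity_pt (fun y => u y ^ 2) x)
    by (intro x; apply continuity_pt_pow_fun, Hu).
  assert (Hv2 : forall x, continuity_pt (fun y => v y ^ 2) x)
    by (intro x; apply continuity_pt_pow_fun, Hv).
  destruct Hab as [Ha1 Hab].
  pose proof (Riemann_integrable_of_continuity _ 0 t Huv Ht) as puv_t.
  pose proof (Riemann_integrable_of_continuity _ a b Huv Hab) as puv.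
  pose proof (Riemann_integrable_of_continuity _ a b Hu2 Hab) as pu.
  pose proof (Riemann_integrable_of_continuity _ 0 a Hu2 ltac:(lra)) as pu0.
  pose proof (Riemann_integrable_of_continuity _ a b Hv2 Hab) as pv.
  assert (Hsupport : RiemannInt puv_t <= RiemannInt puv).
  { apply RiemannInt_le_of_support; auto; try lra.
    - intro x; apply Rmult_le_pos; [apply Rabs_pos | apply pow2_ge_0].
    - intros x Hx Hout; unfold u; rewrite Hsupp, Rabs_R0 by auto; ring. }
  assert (HCS := RiemannInt_Cauchy_Schwarz u v a b pu pv puv Hab).
  assert (Hf4 : RiemannInt pv = RiemannInt prf).
  { apply RiemannInt_P18; [lra |].
    intros x _; unfold v; rewrite <- pow_mult; reflexivity. }
  assert (HGK : RiemannInt pu <= RiemannInt prGK)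
    by (apply (RiemannInt_le_extend_left _ 0 a b pu0); [lra | intros; apply pow2_ge_0]).
  pose proof (Rabs_wronskian_le _ _ _ _ _ _ _ _ HK HG Hf1 Hf2 Hfeq Hfpos
                Hm1 Hm2 Hmeq Hm0 Hm'0 _ Hratio t puv_t Ht) as Hwronskian.
  rewrite Hf4 in HCS.
  apply sqrt_le_1_alt in HGK.
  pose proof (sqrt_pos (RiemannInt prf)).
  rewrite Rmult_assoc; eapply Rle_trans; [exact Hwronskian |].
  apply Rmult_le_compat_l; [lra |].
  eapply Rle_trans; [exact Hsupport |]; eapply Rle_trans; [exact HCS |].
  apply Rmult_le_compat_r; auto.
Qed.
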